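(* Let $n,m$ be positive integers. If the $n\times m$ board has a closed knight tour, then for all positive integers $p_1,\dots,p_r$ the $n\times m\times p_1\times\cdots\times p_r$ board has a closed knight tour.
   Context: For positive integers $n_1,\dots,n_d$, the $n_1\times\cdots\times n_d$ board is $\{1,\dots,n_1\}\times\cdots\times\{1,\dots,n_d\}\subset\mathbb{Z}^d$. A knight move is a vector in $\mathbb{Z}^d$ with exactly one coordinate in $\{\pm1\}$, exactly one coordinate in $\{\pm2\}$ and all other coordinates $0$; two cells are adjacent iff their difference is a knight move. A closed knight tour is a Hamiltonian cycle in this graph. *)

From mathcomp Require Import all_boot all_order all_algebra.
Set Implicit Arguments. Unset Strict Implicit. Unset Printing Implicit Defensive.
Import Order.TTheory GRing.Theory Num.Theory.
Local Open Scope ring_scope.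

Definition cell := seq int.

Definition on_board (ns : seq nat) (x : cell) : bool :=
  (size x == size ns) &&
  all2 (fun (a : int) (n : nat) => (1 <= a) && (a <= n%:Z)) x ns.

Definition knight_move (v : seq int) : bool :=
  [&& count (fun a : int => `|a| == 1) v == 1%N,
      count (fun a : int => `|a| == 2) v == 1%N &
      count (fun a : int => a != 0) v == 2%N].

Definition knight_adj (x y : cell) : bool :=
  (size x == size y) && knight_move [seq p.1 - p.2 | p <- zip x y].

Definition closed_knight_tour (ns : seq nat) : Prop :=
  exists c : seq cell,
    [/\ uniq c, (3 <= size c)%N, (forall x, (x \in c) = on_board ns x)
      & cycle knight_adj c].

From mathcomp Require Import all_boot all_order all_algebra.
From mathcomp Require Import zify.
Set Implicit Arguments. Unset Strict Implicit. Unset Printing Implicit Defensive.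
Import Order.TTheory GRing.Theory Num.Theory.

(* Write a cell of the big board as w ++ q, with w in the n x m board and q in
   the box B = p_1 x ... x p_r.  The box has a Hamiltonian path of unit steps
   (a boustrophedon), and if w, w' differ by +-2 in one coordinate while q, q'
   differ by +-1 in one coordinate, then w ++ q and w' ++ q' are a knight move.
   So it suffices to find in the planar tour two edges {a, b} and {d, c} with
   a, c and d, b at distance two along an axis: cutting these two edges in
   every layer and reconnecting consecutive layers through them yields a tour
   of the product.  Such edges always exist: the corner (1,1) has only the
   knight neighbours (2,3) and (3,2), so both are its tour neighbours, and one
   tour neighbour d of (1,3) is (2,1), (2,5) or (3,4), each two squares away
   from (2,3) or (3,2). *)

Section SymmetricCycles.

Variables (T : eqType) (e : rel T).

Lemma cycle_glue b a c d X Y :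
  cycle e (b :: X ++ [:: a]) -> cycle e (c :: Y ++ [:: d]) -> e a c -> e d b ->
  cycle e ((b :: X ++ [:: a]) ++ c :: Y ++ [:: d]).
Proof.
move=> + + ac db; rewrite /= !rcons_path !cat_path !last_cat /= !andbT.
move=> /andP[/andP[-> ->] _] /andP[/andP[cY Yd] _].
by rewrite ac cat_path /= cY Yd last_cat /= db.
Qed.

Lemma cycle_nbrs v C : uniq C -> 2 < size C -> cycle e C -> v \in C ->
  exists h t l, [/\ perm_eq (v :: h :: rcons t l) C, cycle e (v :: h :: rcons t l),
                    e v h, e l v & h != l].
Proof.
move=> uC sC cC /rot_to[i s eC]; have pC : perm_eq (v :: s) C by rewrite -eC perm_rot.
have {eC}cC : cycle e (v :: s) by rewrite -eC rot_cycle.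
case: s pC cC => [|h s]; first by move/perm_size=> eS; rewrite -eS in sC.
case/lastP: s => [|t l] pC cC; first by move: sC; rewrite -(perm_size pC).
exists h, t, l; split=> //.
- by case/andP: cC.
- by move: cC; rewrite /= !rcons_path last_rcons => /and3P[].
move: uC; rewrite -(perm_uniq pC); apply: contraTneq => <-.
by rewrite /= mem_rcons mem_head andbF.
Qed.

Lemma cycle_interior c a s : cycle e (c :: s) -> a \in s -> ~~ e c a -> ~~ e a c ->
  exists U p q V, [/\ s = U ++ p :: a :: q :: V, e p a & e a q].
Proof.
move=> + aS nca nac; case/splitPr: aS => U1 V1; case/lastP: U1 => [|U p].
  by rewrite /= (negbTE nca).
case: V1 => [|q V] cs.
  by move: cs; rewrite /= rcons_path last_cat last_rcons /= (negbTE nac) andbF.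
exists U, p, q, V; rewrite cat_rcons; move: cs; rewrite /= cat_rcons rcons_path cat_path /=.
by case/andP=> /and5P[].
Qed.

Hypothesis e_sym : symmetric e.

Lemma cycle_rev_sym s : cycle e (rev s) = cycle e s.
Proof. by rewrite rev_cycle; apply: eq_cycle => x y; rewrite e_sym. Qed.

Lemma sorted_rev_sym s : sorted e (rev s) = sorted e s.
Proof. by rewrite rev_sorted; apply: eq_sorted => x y; rewrite e_sym. Qed.

Lemma cycle_orient c d s : cycle e (c :: s) -> d = head c s \/ d = last c s ->
  exists s', [/\ perm_eq s' s, cycle e (c :: s') & last c s' = d].
Proof.
move=> cs [dh|dl]; last by exists s.
exists (rev s); split; first by rewrite perm_rev.
  by rewrite -cat1s cycle_catC cats1 -rev_cons cycle_rev_sym.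
by rewrite dh; case: s {cs dh} => //= x s; rewrite rev_cons last_rcons.
Qed.

End SymmetricCycles.

Lemma split_around (T : eqType) (U1 V1 : seq T) p a q b d :
  last q V1 = d -> b \in [:: p; q] -> b != d ->
  exists U V x y, U1 ++ p :: a :: q :: V1 = U ++ x :: y :: V ++ [:: d]
                  /\ ((x, y) = (a, b) \/ (x, y) = (b, a)).
Proof.
move=> qV; rewrite !inE => /orP[]/eqP-> bd.
  by exists U1, (belast q V1), p, a; rewrite -qV cats1 -lastI; split; last right.
case: V1 qV => [/= qd|v V1 qV]; first by rewrite qd eqxx in bd.
exists (rcons U1 p), (belast v V1), a, q; split; last by left.
by rewrite cat_rcons -qV /= cats1 -lastI.
Qed.

Lemma sorted_cat_link (T : eqType) (e : rel T) x0 s1 s2 : s1 != [::] -> s2 != [::] ->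
  sorted e s1 -> sorted e s2 -> e (last x0 s1) (head x0 s2) -> sorted e (s1 ++ s2).
Proof.
by case: s1 => // a s1; case: s2 => // b s2 _ _ /= p1 p2 ab; rewrite cat_path p1 /= ab.
Qed.

Local Open Scope ring_scope.

Definition cell_diff (x y : cell) : seq int := [seq p.1 - p.2 | p <- zip x y].

Definition ones (v : seq int) := count (fun a : int => `|a| == 1) v.
Definition twos (v : seq int) := count (fun a : int => `|a| == 2) v.
Definition support_size (v : seq int) := count (fun a : int => a != 0) v.

Definition step_profile (i j k : nat) (x y : cell) :=
  [&& size x == size y, ones (cell_diff x y) == i, twos (cell_diff x y) == j
    & support_size (cell_diff x y) == k]%N.

Notation unit_step := (step_profile 1%N 0%N 1%N).
Notation double_step := (step_profile 0%N 1%N 1%N).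

Lemma knight_adjE : knight_adj =2 step_profile 1%N 1%N 2%N.
Proof. by []. Qed.

Lemma cell_diff_cat x y q q' : size x = size y ->
  cell_diff (x ++ q) (y ++ q') = cell_diff x y ++ cell_diff q q'.
Proof. by move=> sxy; rewrite /cell_diff zip_cat // map_cat. Qed.

Lemma cell_diffxx (q : cell) : cell_diff q q = nseq (size q) 0.
Proof. by elim: q => // a q IHq; rewrite /cell_diff /= subrr -IHq. Qed.

Lemma cell_diffC x y : cell_diff y x = map -%R (cell_diff x y).
Proof. by elim: x y => [|a x IHx] [|b y] //=; rewrite opprB -IHx. Qed.

Lemma step_profileC i j k : symmetric (step_profile i j k).
Proof.
have countN (P : pred int) v : (forall a, P (- a) = P a) -> count P (map -%R v) = count P v.
  by move=> PN; rewrite count_map; apply: eq_count => a /=; rewrite PN.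
move=> x y; rewrite /step_profile cell_diffC eq_sym /ones /twos /support_size.
by rewrite !countN // => a; rewrite ?normrN ?oppr_eq0.
Qed.

Lemma step_profile_cat i j k i' j' k' x y q q' : step_profile i j k x y ->
  step_profile i' j' k' q q' -> step_profile (i + i') (j + j') (k + k') (x ++ q) (y ++ q').
Proof.
move=> /and4P[/eqP sxy o1 t1 z1] /and4P[/eqP sqq o2 t2 z2].
rewrite /step_profile !size_cat sxy sqq cell_diff_cat //; move: o1 t1 z1 o2 t2 z2.
rewrite /ones /twos /support_size !count_cat => /eqP-> /eqP-> /eqP-> /eqP-> /eqP-> /eqP->.
by rewrite !eqxx.
Qed.

Lemma step_profile_refl (q : cell) : step_profile 0%N 0%N 0%N q q.
Proof.
by rewrite /step_profile cell_diffxx /ones /twos /support_size !count_nseq !mul0n eqxx.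
Qed.

Lemma step_profile_cons i j k (a : int) u v :
  step_profile i j k (a :: u) (a :: v) = step_profile i j k u v.
Proof. by rewrite /step_profile /cell_diff /= subrr. Qed.

Lemma knight_adj_sym : symmetric knight_adj.
Proof. exact: step_profileC. Qed.

Lemma knight_adj_catr x y q : knight_adj x y -> knight_adj (x ++ q) (y ++ q).
Proof. by move=> xy; apply: (step_profile_cat xy (step_profile_refl q)). Qed.

Lemma knight_adj_cat_steps x y q q' :
  double_step x y -> unit_step q q' -> knight_adj (x ++ q) (y ++ q').
Proof. exact: step_profile_cat. Qed.

Definition layer (q : cell) (L : seq cell) := [seq w ++ q | w <- L].
Definition stack (L Q : seq cell) := flatten [seq layer q L | q <- Q].

Lemma stack_cons L q Q : stack L (q :: Q) = layer q L ++ stack L Q.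
Proof. by []. Qed.

Lemma cycle_layer q L : cycle knight_adj L -> cycle knight_adj (layer q L).
Proof. by apply: homo_cycle => u v; apply: knight_adj_catr. Qed.

Section StackCycle.

Variables (a b c d x y : cell) (U V : seq cell).
Local Notation L := (c :: U ++ x :: y :: V ++ [:: d]).
Hypotheses (cycleL : cycle knight_adj L)
  (ac : double_step a c) (db : double_step d b)
  (xy : (x, y) = (a, b) \/ (x, y) = (b, a)).

Lemma layerE q : layer q L =
  (c ++ q) :: layer q U ++ (x ++ q) :: (y ++ q) :: layer q V ++ [:: d ++ q].
Proof. by rewrite /layer /= map_cat /= map_cat. Qed.

Lemma stack_cycle q Q : sorted unit_step (q :: Q) ->
  exists M, perm_eq ((y ++ q) :: M ++ [:: x ++ q]) (stack L (q :: Q))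
            /\ cycle knight_adj ((y ++ q) :: M ++ [:: x ++ q]).
Proof.
pose head_arc q := (c ++ q) :: layer q U ++ [:: x ++ q].
pose tail_arc q := (y ++ q) :: layer q V ++ [:: d ++ q].
have arcsE p : layer p L = head_arc p ++ tail_arc p.
  by rewrite layerE /head_arc /tail_arc /= -catA.
have spliceE p W : (y ++ p) :: (layer p V ++ (d ++ p) :: W ++ (c ++ p) :: layer p U)
    ++ [:: x ++ p] = tail_arc p ++ W ++ head_arc p.
  by rewrite /tail_arc /head_arc /= -!catA /= -!catA.
elim: Q q => [|q' Q IHQ] q.
  move=> _; exists (layer q V ++ (d ++ q) :: [::] ++ (c ++ q) :: layer q U).
  rewrite spliceE cat0s stack_cons cats0 arcsE perm_catC.
  by rewrite cycle_catC -arcsE cycle_layer.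
case/andP=> qq' /IHQ[M0 [pM0 cM0]].
(* The layer q, cut at {x, y} and {d, c}, is spliced with the tour of the
   remaining layers, cut at its edge {a ++ q', b ++ q'}. *)
have [M1 [pM1 cM1]] : exists M1,
    perm_eq ((b ++ q') :: M1 ++ [:: a ++ q']) (stack L (q' :: Q))
    /\ cycle knight_adj ((b ++ q') :: M1 ++ [:: a ++ q']).
  case: xy pM0 cM0 => -[-> ->]; first by exists M0.
  exists (rev M0); have revE : (b ++ q') :: rev M0 ++ [:: a ++ q'] =
      rev ((a ++ q') :: M0 ++ [:: b ++ q']) by rewrite rev_cons rev_cat /= cats1.
  by rewrite revE perm_rev cycle_rev_sym //; apply: knight_adj_sym.
pose X := (b ++ q') :: M1 ++ [:: a ++ q'].
exists (layer q V ++ (d ++ q) :: X ++ (c ++ q) :: layer q U); rewrite spliceE; split.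
  rewrite perm_catC -catA -arcsE stack_cons perm_catC.
  by rewrite perm_cat2l.
have layer_ends : layer q L =
    (c ++ q) :: (layer q U ++ (x ++ q) :: (y ++ q) :: layer q V) ++ [:: d ++ q].
  by rewrite layerE -catA.
rewrite cycle_catC -catA -arcsE layer_ends.
apply: cycle_glue => //; first by rewrite -layer_ends cycle_layer.
  by apply: knight_adj_cat_steps => //; rewrite step_profileC.
exact: knight_adj_cat_steps.
Qed.

End StackCycle.

Lemma on_board_size ns w : on_board ns w -> size w = size ns.
Proof. by case/andP=> /eqP. Qed.

Lemma on_board_cat ns ms w q : size w = size ns ->
  on_board (ns ++ ms) (w ++ q) = on_board ns w && on_board ms q.
Proof.
rewrite /on_board !size_cat => sw; rewrite sw eqn_add2l eqxx /=.
by elim: w ns sw => [|a w IHw] [|n ns] //= [/IHw IH]; rewrite andbCA IH andbA.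
Qed.

Lemma mem_stack L Q z :
  reflect (exists w q, [/\ w \in L, q \in Q & z = w ++ q]) (z \in stack L Q).
Proof.
apply: (iffP flattenP) => [[s /mapP[q qQ ->] /mapP[w wL ->]]|[w [q [wL qQ ->]]]].
  by exists w, q.
by exists (layer q L); apply/mapP; [exists q | exists w].
Qed.

Lemma stack_uniq k L Q : {in L, forall w, size w = k} -> uniq L -> uniq Q ->
  uniq (stack L Q).
Proof.
move=> sL uL; elim: Q => [|q Q IHQ] //= /andP[qQ /IHQ uS].
rewrite cat_uniq uS andbT; apply/andP; split.
  rewrite map_inj_in_uniq // => w w' wL w'L /eqP.
  by rewrite eqseq_cat ?sL // => /andP[/eqP].
apply/hasP => -[_ /mem_stack[w [q' [wL q'Q ->]]] /mapP[w' w'L /eqP]].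
by rewrite eqseq_cat ?sL // => /andP[_ /eqP eq']; rewrite -eq' q'Q in qQ.
Qed.

Lemma mem_stack_board ns ms L Q :
  (forall w, (w \in L) = on_board ns w) -> (forall q, (q \in Q) = on_board ms q) ->
  forall z, (z \in stack L Q) = on_board (ns ++ ms) z.
Proof.
move=> mL mQ z; apply/mem_stack/idP => [[w [q [wL qQ ->]]]|zB].
  by rewrite on_board_cat -?mL -?mQ ?wL //; apply: on_board_size; rewrite -mL.
have sz : size z = (size ns + size ms)%N by rewrite -size_cat (on_board_size zB).
have /andP[wB qB] : on_board ns (take (size ns) z) && on_board ms (drop (size ns) z).
  by rewrite -on_board_cat ?cat_take_drop // size_takel // sz leq_addr.
by exists (take (size ns) z), (drop (size ns) z); rewrite mL mQ cat_take_drop.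
Qed.

Lemma unit_step_succ (i : int) (u : cell) : unit_step (i :: u) ((i + 1) :: u).
Proof.
have step_i : unit_step [:: i] [:: i + 1].
  rewrite /step_profile /= opprD addrA subrr add0r normrN normr1 oppr_eq0 oner_eq0 eqxx.
  have -> : (1 == 2 :> int) = false by [].
  by [].
exact: step_profile_cat step_i (step_profile_refl u).
Qed.

Definition zigzag_row (S : seq cell) (i : nat) : seq cell :=
  [seq i%:Z :: w | w <- if odd i then S else rev S].

Definition zigzag_rows (S : seq cell) (p : nat) : seq cell :=
  flatten [seq zigzag_row S i | i <- iota 1 p].

Fixpoint boustrophedon (ps : seq nat) : seq cell :=
  if ps is p :: ps' then zigzag_rows (boustrophedon ps') p else [:: [::]].

Section ZigzagRows.

Variable S : seq cell.

Lemma zigzag_rowsS p : zigzag_rows S p.+1 = zigzag_rows S p ++ zigzag_row S p.+1.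
Proof. by rewrite /zigzag_rows -[p.+1]addn1 iotaD map_cat flatten_cat /= cats0 add1n addn1. Qed.

Lemma zigzag_row_neq0 i : S != [::] -> zigzag_row S i != [::].
Proof. by case: S => // w S' _; rewrite -size_eq0 size_map; case: odd; rewrite ?size_rev. Qed.

Lemma zigzag_rows_neq0 p : S != [::] -> zigzag_rows S p.+1 != [::].
Proof.
move=> S_neq0; rewrite zigzag_rowsS -size_eq0 size_cat addn_eq0 !size_eq0.
by rewrite (negbTE (zigzag_row_neq0 _ S_neq0)) andbF.
Qed.

Lemma zigzag_row_ends i : S != [::] ->
  head [::] (zigzag_row S i) = i%:Z :: (if odd i then head [::] S else last [::] S) /\
  last [::] (zigzag_row S i) = i%:Z :: (if odd i then last [::] S else head [::] S).
Proof.
case: S => // w S' _; rewrite /zigzag_row; case: odd => /=.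
  by rewrite (last_map (cons i%:Z)).
case/lastP: S' => [|S' v] //=; rewrite rev_cons rev_rcons /= map_rcons last_rcons.
by rewrite last_rcons.
Qed.

Lemma mem_zigzag_rows p (i : int) (w : cell) :
  (i :: w \in zigzag_rows S p) = (1 <= i <= p%:Z) && (w \in S).
Proof.
elim: p => [|p IHp]; first by rewrite in_nil andbC; case: (w \in S) => //; lia.
rewrite zigzag_rowsS mem_cat IHp /zigzag_row.
have -> : (i :: w \in [seq p.+1%:Z :: w | w <- if odd p.+1 then S else rev S])
    = (i == p.+1%:Z) && (w \in S).
  have memS : (if odd p.+1 then S else rev S) =i S by case: odd => // u; rewrite mem_rev.
  apply/mapP/andP => [[w' + [-> ->]]|[/eqP-> wS]]; first by rewrite memS.
  by exists w; rewrite ?memS.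
by rewrite -andb_orl; congr (_ && _); lia.
Qed.

Lemma nil_notin_zigzag_rows p : [::] \notin zigzag_rows S p.
Proof. by apply/negP => /flattenP[_ /mapP[i _ ->] /mapP[]]. Qed.

Lemma zigzag_rows_uniq p : uniq S -> uniq (zigzag_rows S p).
Proof.
move=> S_uniq; elim: p => // p IHp; rewrite zigzag_rowsS cat_uniq IHp /=.
rewrite map_inj_uniq => [|u v [] //]; rewrite fun_if rev_uniq if_same S_uniq andbT.
apply/hasP => -[_ /mapP[w _ ->]]; rewrite mem_zigzag_rows; lia.
Qed.

Lemma zigzag_rows_sorted p : S != [::] -> sorted unit_step S ->
  sorted unit_step (zigzag_rows S p).
Proof.
move=> S_neq0 S_sorted.
have row_sorted i : sorted unit_step (zigzag_row S i).
  rewrite /zigzag_row sorted_map (eq_sorted (e' := unit_step)) => [|u v];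
    last exact: step_profile_cons.
  by case: odd; rewrite ?sorted_rev_sym //; apply: step_profileC.
elim: p => [|[|p] IHp] //; first by rewrite zigzag_rowsS; exact: (row_sorted 1).
rewrite [zigzag_rows S p.+2]zigzag_rowsS (@sorted_cat_link _ _ [::]) ?zigzag_row_neq0 //.
  exact: zigzag_rows_neq0.
have lastE (s1 s2 : seq cell) : s2 != [::] -> last [::] (s1 ++ s2) = last [::] s2.
  by rewrite last_cat; case: s2.
rewrite zigzag_rowsS lastE ?zigzag_row_neq0 //.
have [_ ->] := zigzag_row_ends p.+1 S_neq0; have [-> _] := zigzag_row_ends p.+2 S_neq0.
rewrite /= negbK; have -> : p.+2%:Z = p.+1%:Z + 1 by lia.
by case: odd; apply: unit_step_succ.
Qed.

End ZigzagRows.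

Lemma boustrophedon_spec ps : all (fun p => 0 < p)%N ps ->
  [/\ boustrophedon ps != [::], uniq (boustrophedon ps),
      sorted unit_step (boustrophedon ps)
    & forall z, (z \in boustrophedon ps) = on_board ps z].
Proof.
elim: ps => [_|[|p] ps IHps] //=; first by split=> // -[].
case/IHps=> S_neq0 S_uniq S_sorted memS; split.
- exact: zigzag_rows_neq0.
- exact: zigzag_rows_uniq.
- exact: zigzag_rows_sorted.
by case=> [|i w]; rewrite ?(negbTE (nil_notin_zigzag_rows _ _)) // mem_zigzag_rows memS
  /on_board /= eqSS andbCA.
Qed.

Section Board2D.

Variables n m : nat.
Local Notation board := (on_board [:: n; m]).

Lemma knight_nbrs_11 y : board y -> knight_adj [:: 1; 1] y ->
  y \in [:: [:: 2; 3]; [:: 3; 2]].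
Proof.
case: y => [|y1 [|y2 [|? ?]]] //; rewrite /on_board /= => /and3P[y1B y2B _].
rewrite knight_adjE /step_profile /= /ones /twos /support_size /=.
move=> /and3P[/eqP e1 /eqP e2 /eqP e3].
rewrite !inE !eqseq_cons !andbT; lia.
Qed.

Lemma knight_nbrs_13 y : board y -> knight_adj [:: 1; 3] y ->
  y \in [:: [:: 2; 1]; [:: 2; 5]; [:: 3; 2]; [:: 3; 4]].
Proof.
case: y => [|y1 [|y2 [|? ?]]] //; rewrite /on_board /= => /and3P[y1B y2B _].
rewrite knight_adjE /step_profile /= /ones /twos /support_size /=.
move=> /and3P[/eqP e1 /eqP e2 /eqP e3].
rewrite !inE !eqseq_cons !andbT; lia.
Qed.

Lemma knight_nbrs_11_pair p q : board p -> board q ->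
  knight_adj [:: 1; 1] p -> knight_adj [:: 1; 1] q -> p != q ->
  {subset [:: [:: 2; 3]; [:: 3; 2]] <= [:: p; q]}.
Proof.
move=> pB qB /(knight_nbrs_11 pB) + /(knight_nbrs_11 qB) + + b.
rewrite !inE => /orP[]/eqP-> /orP[]/eqP->; rewrite ?eqxx //.
all: by move=> _ /orP[]/eqP->; rewrite eqxx ?orbT.
Qed.

End Board2D.

Section Tour2D.

Variables (n m : nat) (C : seq cell).
Hypotheses (n_gt0 : (0 < n)%N) (m_gt0 : (0 < m)%N) (C_uniq : uniq C) (C_size : (3 <= size C)%N)
  (memC : forall z, (z \in C) = on_board [:: n; m] z) (C_cycle : cycle knight_adj C).

Lemma tour_width_ge3 : (3 <= m)%N.
Proof.
have aC : [:: 1; 1] \in C by rewrite memC /on_board /=; lia.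
have [h [t [l [pC _ ah la hl]]]] := cycle_nbrs C_uniq C_size C_cycle aC.
have hB : on_board [:: n; m] h by rewrite -memC -(perm_mem pC) !inE eqxx orbT.
have lB : on_board [:: n; m] l by rewrite -memC -(perm_mem pC) !inE mem_rcons inE eqxx !orbT.
rewrite knight_adj_sym in la.
have := knight_nbrs_11_pair hB lB ah la hl (mem_head _ _).
by rewrite !inE => /orP[]/eqP e; [move: hB | move: lB]; rewrite -e /on_board /=; lia.
Qed.

Lemma tour_orient_13 : exists s d,
  [/\ perm_eq ([:: 1; 3] :: s) C, cycle knight_adj ([:: 1; 3] :: s),
      last [:: 1; 3] s = d & d \in [:: [:: 2; 1]; [:: 2; 5]; [:: 3; 4]]].
Proof.
have m_ge3 := tour_width_ge3.
have cC : [:: 1; 3] \in C by rewrite memC /on_board /=; lia.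
have [h [t [l [pC cycC ch lc hl]]]] := cycle_nbrs C_uniq C_size C_cycle cC.
have hB : on_board [:: n; m] h by rewrite -memC -(perm_mem pC) !inE eqxx orbT.
have lB : on_board [:: n; m] l by rewrite -memC -(perm_mem pC) !inE mem_rcons inE eqxx !orbT.
rewrite knight_adj_sym in lc.
have [d dhl d32] : exists2 d, d \in [:: h; l] & d != [:: 3; 2].
  case: (eqVneq h [:: 3; 2]) => [eh|]; last by exists h; rewrite ?inE ?eqxx.
  by exists l; rewrite ?inE ?eqxx ?orbT // -eh eq_sym.
have dN : d \in [:: [:: 2; 1]; [:: 2; 5]; [:: 3; 4]].
  rewrite 2!inE in dhl; case/orP: dhl d32 => /eqP->;
    [move: (knight_nbrs_13 hB ch) | move: (knight_nbrs_13 lB lc)];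
  by rewrite !inE => /or4P[]/eqP->; rewrite ?eqxx.
have d_end : d = head [:: 1; 3] (h :: rcons t l) \/ d = last [:: 1; 3] (h :: rcons t l).
  by move: dhl; rewrite /= last_rcons !inE => /orP[]/eqP->; [left|right].
have [s [ps cycs sd]] := cycle_orient knight_adj_sym cycC d_end.
by exists s, d; split=> //; apply: perm_trans pC; rewrite perm_cons.
Qed.

Lemma tour_decomp : exists a b c d x y U V,
  [/\ perm_eq (c :: U ++ x :: y :: V ++ [:: d]) C,
      cycle knight_adj (c :: U ++ x :: y :: V ++ [:: d]),
      double_step a c, double_step d b
    & (x, y) = (a, b) \/ (x, y) = (b, a)].
Proof.
have aC : [:: 1; 1] \in C by rewrite memC /on_board /=; lia.
have [s [d [sC cycs sd dN]]] := tour_orient_13.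
have aS : [:: 1; 1] \in s by move: aC; rewrite -(perm_mem sC) inE eqseq_cons eqxx.
have ca : ~~ knight_adj [:: 1; 3] [:: 1; 1].
  by rewrite knight_adjE /step_profile /cell_diff /ones /=.
have ac : ~~ knight_adj [:: 1; 1] [:: 1; 3] by rewrite knight_adj_sym.
have [U1 [p [q [V1 [sE pa aq]]]]] := cycle_interior cycs aS ca ac.
have [pB qB] : on_board [:: n; m] p /\ on_board [:: n; m] q.
  by rewrite -!memC -!(perm_mem sC) sE !(inE, mem_cat) !eqxx !orbT.
have pq : p != q.
  move: C_uniq; rewrite -(perm_uniq sC) sE; apply: contraTneq => <-.
  by rewrite /= cat_uniq /= !inE eqxx !orbT !andbF.
rewrite knight_adj_sym in pa.
pose b : cell := if d == [:: 3; 4] then [:: 3; 2] else [:: 2; 3].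
have [db bd] : double_step d b /\ b != d.
  rewrite /b; move: dN; rewrite !inE => /or3P[]/eqP->;
  by rewrite /step_profile /cell_diff /ones /twos /support_size /=.
have b_pq : b \in [:: p; q].
  apply: (knight_nbrs_11_pair pB qB pa aq pq).
  by rewrite /b; case: eqP => _; rewrite !inE eqxx ?orbT.
have V1d : last q V1 = d by rewrite -sd sE last_cat.
have [U [V [x [y [LE xy]]]]] := split_around U1 [:: 1; 1] V1d b_pq bd.
by exists [:: 1; 1], b, [:: 1; 3], d, x, y, U, V; rewrite -LE -sE.
Qed.

End Tour2D.

Local Close Scope ring_scope.

Theorem corollary4p3 (n m : nat) :
  (0 < n)%N -> (0 < m)%N ->
  closed_knight_tour [:: n; m] ->
  forall ps : seq nat, all (fun p => 0 < p)%N ps ->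
  closed_knight_tour (n :: m :: ps).
Proof.
move=> n_gt0 m_gt0 [C [C_uniq C_size memC C_cycle]] ps ps_gt0.
have [a [b [c [d [x [y [U [V [pL cL ac db xy]]]]]]]]] :=
  tour_decomp n_gt0 m_gt0 C_uniq C_size memC C_cycle.
have [] := boustrophedon_spec ps_gt0.
case: (boustrophedon ps) => [|q Q] // _ Q_uniq Q_sorted memQ.
have [M [pM cM]] := stack_cycle cL ac db xy Q_sorted.
have memL w : (w \in c :: U ++ x :: y :: V ++ [:: d]) = on_board [:: n; m] w.
  by rewrite (perm_mem pL).
exists ((y ++ q) :: M ++ [:: x ++ q]); split=> //.
- rewrite (perm_uniq pM) (@stack_uniq 2) ?(perm_uniq pL) // => w.
  by rewrite memL => /on_board_size.
- rewrite (perm_size pM) stack_cons size_cat size_map (perm_size pL).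
  exact: leq_trans C_size (leq_addr _ _).
by move=> z; rewrite (perm_mem pM) (mem_stack_board memL memQ).
Qed.
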